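(* Let $G$ be a stable (causal) LTI system with $m$ inputs and $p$ outputs. With respect to the adjacency relation $\mathrm{Adj}$ below, with $K=\mathrm{diag}(k_1,\dots,k_m)$ and $|k|_2=(\sum_{i=1}^m k_i^2)^{1/2}$, $$\|GK\|_2\le \Delta^{m,p}_2 G\le |k|_2\,\|G\|_2.$$
   Context: Signals are maps $u:\mathbb N\to\mathbb R^m$. For $k=(k_1,\dots,k_m)$ with all $k_i>0$, two input signals $u,u'$ are adjacent, $\mathrm{Adj}(u,u')$, iff for every $i\in\{1,\dots,m\}$ there exist $t_i\in\mathbb N$ and $\alpha_i\in\mathbb R$ with $|\alpha_i|\le k_i$ and $u'_i-u_i=\alpha_i\delta_{t_i}$, where $\delta_{t}$ is the discrete unit impulse at time $t$. The $\ell_2$-sensitivity of a system $G$ with $m$ inputs and $p$ outputs is $\Delta^{m,p}_2 G=\sup_{\mathrm{Adj}(u,u')}\|G(u-u')\|_2$, where $\|v\|_2=(\sum_t |v_t|_2^2)^{1/2}$. The $\mathcal H_2$ norm of an LTI system $G$ with $m$ inputs is $\|G\|_2^2=\sum_{i=1}^m\|G\delta_0e_i\|_2^2=\frac{1}{2\pi}\int_{-\pi}^{\pi}\mathrm{Tr}(G(e^{j\omega})^*G(e^{j\omega}))\,d\omega$, $e_i$ being the standard basis vectors. *)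

From Stdlib Require Import Reals Lra Lia Arith.
Open Scope R_scope.

Fixpoint fsum (n : nat) (f : nat -> R) : R :=
  match n with
  | O => 0
  | S n' => fsum n' f + f n'
  end.

(* A signal with values in R^q is a map  nat (time) -> nat (component) -> R;
   only components 0..q-1 are meaningful. *)
Definition signal := nat -> nat -> R.

(* A causal LTI system with m inputs and p outputs, given by its impulse
   response h : nat -> 'M_(p,m) (h t o j = entry (o,j) of the t-th Markov
   parameter). *)
Definition sys_apply (m : nat) (h : nat -> nat -> nat -> R) (u : signal) : signal :=
  fun t o => fsum (S t) (fun s => fsum m (fun j => h (t - s)%nat o j * u s j)).

Definition stable (m p : nat) (h : nat -> nat -> nat -> R) : Prop :=
  forall o j, (o < p)%nat -> (j < m)%nat ->
    exists L, infinite_sum (fun t => Rabs (h t o j)) L.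

Definition delta (t0 t : nat) : R := if Nat.eqb t t0 then 1 else 0.

Definition impulse_input (i : nat) : signal :=
  fun t j => delta 0 t * (if Nat.eqb j i then 1 else 0).

Definition has_l2norm (p : nat) (v : signal) (r : R) : Prop :=
  exists L, infinite_sum (fun t => fsum p (fun o => (v t o) ^ 2)) L /\ r = sqrt L.

Definition has_H2norm (m p : nat) (h : nat -> nat -> nat -> R) (r : R) : Prop :=
  exists nrm : nat -> R,
    (forall i, (i < m)%nat -> has_l2norm p (sys_apply m h (impulse_input i)) (nrm i)) /\
    r = sqrt (fsum m (fun i => (nrm i) ^ 2)).

Definition Adj (m : nat) (k : nat -> R) (u u' : signal) : Prop :=
  forall i, (i < m)%nat ->
    exists (ti : nat) (alpha : R), Rabs alpha <= k i /\
      forall t, u' t i - u t i = alpha * delta ti t.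

(* Set of values ||G(u - u')||_2 over adjacent pairs; the l2-sensitivity is
   its supremum. *)
Definition sens_set (m p : nat) (k : nat -> R) (h : nat -> nat -> nat -> R) (r : R) : Prop :=
  exists u u', Adj m k u u' /\
    has_l2norm p (sys_apply m h (fun t j => u t j - u' t j)) r.

(* The system G K, K = diag(k_1,...,k_m). *)
Definition scale_inputs (k : nat -> R) (h : nat -> nat -> nat -> R) : nat -> nat -> nat -> R :=
  fun t o j => h t o j * k j.

Definition vnorm2 (m : nat) (k : nat -> R) : R := sqrt (fsum m (fun i => (k i) ^ 2)).

From Stdlib Require Import Reals Lra Lia FunctionalExtensionality.
Open Scope R_scope.

(* The response to an adjacent pair splits channel by channel into delayed impulse responses of
   G e_i scaled by |alpha_i| <= k_i, so by Minkowski its l2 norm is at most sum_i k_i ||G e_i||_2,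
   which Cauchy-Schwarz bounds by |k|_2 ||G||_2.  Conversely, impulses of size +-k_i at time 0 form
   an input adjacent to 0; choosing the signs one channel at a time, the parallelogram law lets
   each new channel add at least its own energy k_i^2 ||G e_i||_2^2, so some such pair attains
   at least ||GK||_2. *)

(** * Finite sums and series *)

Lemma fsum_ext n f g : (forall i, (i < n)%nat -> f i = g i) -> fsum n f = fsum n g.
Proof.
  induction n as [|n IH]; intros Hfg; simpl; [reflexivity|].
  rewrite IH by (intros; apply Hfg; lia). rewrite Hfg by lia. reflexivity.
Qed.

Lemma fsum_add n f g : fsum n (fun i => f i + g i) = fsum n f + fsum n g.
Proof. induction n as [|n IH]; simpl; [lra|]. rewrite IH; lra. Qed.

Lemma fsum_scal_l n c f : fsum n (fun i => c * f i) = c * fsum n f.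
Proof. induction n as [|n IH]; simpl; [lra|]. rewrite IH; lra. Qed.

Lemma fsum_le n f g : (forall i, (i < n)%nat -> f i <= g i) -> fsum n f <= fsum n g.
Proof.
  induction n as [|n IH]; intros Hfg; simpl; [lra|].
  assert (fsum n f <= fsum n g) by (apply IH; intros; apply Hfg; lia).
  assert (f n <= g n) by (apply Hfg; lia). lra.
Qed.

Lemma fsum_nonneg n f : (forall i, (i < n)%nat -> 0 <= f i) -> 0 <= fsum n f.
Proof.
  intros Hf. replace 0 with (fsum n (fun _ => 0)) at 1.
  - apply fsum_le; exact Hf.
  - induction n as [|n IH]; simpl; [reflexivity|]. rewrite IH by (intros; apply Hf; lia). lra.
Qed.

Lemma fsum_comm n m (f : nat -> nat -> R) :
  fsum n (fun i => fsum m (fun j => f i j)) = fsum m (fun j => fsum n (fun i => f i j)).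
Proof.
  induction n as [|n IH]; simpl.
  - induction m as [|m IHm]; simpl; [reflexivity|]. rewrite <- IHm; lra.
  - rewrite IH, <- fsum_add. reflexivity.
Qed.

Lemma fsum_delta n a f : fsum n (fun s => f s * delta a s) = if (a <? n)%nat then f a else 0.
Proof.
  induction n as [|n IH]; simpl; [reflexivity|]. rewrite IH. unfold delta.
  destruct (Nat.eqb_spec n a), (Nat.ltb_spec a n), (Nat.ltb_spec a (S n));
    try lia; subst; lra.
Qed.

Lemma fsum_bounded n (F : nat -> nat -> R) :
  (forall i, (i < n)%nat -> exists B, forall N, F i N <= B) ->
  exists B, forall N, fsum n (fun i => F i N) <= B.
Proof.
  induction n as [|n IH]; intros HF.
  - exists 0; intros; simpl; lra.
  - destruct IH as [B HB]; [intros; apply HF; lia|].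
    destruct (HF n) as [Bn HBn]; [lia|].
    exists (B + Bn); intros N; simpl. specialize (HB N); specialize (HBn N); lra.
Qed.

Lemma finite_choice {A : Type} (a0 : A) (P : nat -> A -> Prop) m :
  (forall j, (j < m)%nat -> exists x, P j x) -> exists f : nat -> A, forall j, (j < m)%nat -> P j (f j).
Proof.
  induction m as [|m IH]; intros HP.
  - exists (fun _ => a0); intros; lia.
  - destruct IH as [f Hf]; [intros; apply HP; lia|].
    destruct (HP m) as [x Hx]; [lia|].
    exists (fun j => if (j =? m)%nat then x else f j); intros j Hj.
    destruct (Nat.eqb_spec j m); [subst; exact Hx|apply Hf; lia].
Qed.

Lemma quadratic_discriminant A B C :
  0 <= B -> (forall l, 0 <= A + 2 * l * C + l * l * B) -> C * C <= A * B.
Proof.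
  intros HB Hq. destruct (Rle_lt_or_eq_dec _ _ HB) as [Bpos|B0].
  - specialize (Hq (- C / B)).
    replace (A + 2 * (- C / B) * C + - C / B * (- C / B) * B) with (A - C * C / B) in Hq
      by (field; lra).
    replace (C * C) with (C * C / B * B) by (field; lra). nra.
  - subst B. destruct (Req_dec C 0) as [->|HC]; [lra|].
    specialize (Hq (- (A + 1) / (2 * C))).
    replace (A + 2 * (- (A + 1) / (2 * C)) * C + - (A + 1) / (2 * C) * (- (A + 1) / (2 * C)) * 0)
      with (-1) in Hq by (field; exact HC). lra.
Qed.

Lemma fsum_cauchy_schwarz n a b :
  fsum n (fun i => a i * b i) <= sqrt (fsum n (fun i => a i ^ 2)) * sqrt (fsum n (fun i => b i ^ 2)).
Proof.
  set (A := fsum n (fun i => a i ^ 2)); set (B := fsum n (fun i => b i ^ 2)).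
  set (C := fsum n (fun i => a i * b i)).
  assert (HA : 0 <= A) by (apply fsum_nonneg; intros; apply pow2_ge_0).
  assert (HC : C * C <= A * B).
  { apply quadratic_discriminant; [apply fsum_nonneg; intros; apply pow2_ge_0|].
    intros l. replace (A + 2 * l * C + l * l * B) with (fsum n (fun i => (a i + l * b i) ^ 2)).
    - apply fsum_nonneg; intros; apply pow2_ge_0.
    - unfold A, B, C. rewrite <- !fsum_scal_l, <- !fsum_add. apply fsum_ext; intros; ring. }
  rewrite <- sqrt_mult_alt by exact HA.
  eapply Rle_trans; [apply Rle_abs|]. rewrite <- sqrt_Rsqr_abs. apply sqrt_le_1_alt. exact HC.
Qed.

Lemma sum_f_R0_fsum f n : sum_f_R0 f n = fsum (S n) f.
Proof. induction n as [|n IH]; simpl; [lra|]. rewrite IH. reflexivity. Qed.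

Lemma Un_cv_const c : Un_cv (fun _ => c) c.
Proof. intros eps Heps. exists 0%nat. intros. rewrite Rdist_eq. lra. Qed.

Lemma infinite_sum_plus f g a b :
  infinite_sum f a -> infinite_sum g b -> infinite_sum (fun t => f t + g t) (a + b).
Proof.
  intros Hf Hg. change (Un_cv (sum_f_R0 (fun t => f t + g t)) (a + b)).
  replace (sum_f_R0 (fun t => f t + g t)) with (fun n => sum_f_R0 f n + sum_f_R0 g n)
    by (apply functional_extensionality; intros; symmetry; apply plus_sum).
  apply CV_plus; assumption.
Qed.

Lemma infinite_sum_scal c f a : infinite_sum f a -> infinite_sum (fun t => c * f t) (c * a).
Proof.
  intros Hf. change (Un_cv (sum_f_R0 (fun t => c * f t)) (c * a)).
  replace (sum_f_R0 (fun t => c * f t)) with (fun n => c * sum_f_R0 f n).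
  - apply CV_mult; [apply Un_cv_const|exact Hf].
  - apply functional_extensionality; intros n. rewrite !sum_f_R0_fsum. symmetry; apply fsum_scal_l.
Qed.

Lemma infinite_sum_partial_le f L N :
  (forall t, 0 <= f t) -> infinite_sum f L -> fsum N f <= L.
Proof.
  intros Hf HL.
  assert (Hn : forall n, fsum (S n) f <= L)
    by (intros n; rewrite <- sum_f_R0_fsum; apply sum_incr; assumption).
  destruct N as [|N]; [|apply Hn].
  specialize (Hn 0%nat); specialize (Hf 0%nat); simpl in *; lra.
Qed.

Lemma infinite_sum_of_bounded f B :
  (forall t, 0 <= f t) -> (forall N, fsum N f <= B) -> exists L, infinite_sum f L /\ L <= B.
Proof.
  intros Hf HB.
  assert (Hgrow : Un_growing (sum_f_R0 f)) by (intros n; simpl; specialize (Hf (S n)); lra).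
  assert (Hub : has_ub (sum_f_R0 f))
    by (exists B; intros x [n ->]; rewrite sum_f_R0_fsum; apply HB).
  destruct (growing_cv _ Hgrow Hub) as [L HL].
  exists L; split; [exact HL|].
  apply (Rle_cv_lim (Un := sum_f_R0 f) (Vn := fun _ => B)); [|exact HL|apply Un_cv_const].
  intros n; rewrite sum_f_R0_fsum; apply HB.
Qed.

Lemma sqrt_le_pow2 a b : 0 <= a -> sqrt a <= b -> a <= b ^ 2.
Proof.
  intros Ha Hab. rewrite <- (pow2_sqrt a) by exact Ha.
  apply pow_incr. split; [apply sqrt_pos|exact Hab].
Qed.

(** * Energy of signals *)

Ltac signal_ext := apply functional_extensionality; intros ?t; apply functional_extensionality; intros ?o.

Definition energy_upto (N p : nat) (x : signal) : R := fsum N (fun t => fsum p (fun o => x t o ^ 2)).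

(* [has_l2norm p x r] unfolds to [exists L, energy p x L /\ r = sqrt L]. *)
Definition energy (p : nat) (x : signal) (L : R) : Prop :=
  infinite_sum (fun t => fsum p (fun o => x t o ^ 2)) L.

Definition dot (N p : nat) (x y : signal) : R := fsum N (fun t => fsum p (fun o => x t o * y t o)).

Lemma energy_term_nonneg p (x : signal) t : 0 <= fsum p (fun o => x t o ^ 2).
Proof. apply fsum_nonneg; intros; apply pow2_ge_0. Qed.

Lemma energy_upto_nonneg N p x : 0 <= energy_upto N p x.
Proof. apply fsum_nonneg; intros; apply energy_term_nonneg. Qed.

Lemma energy_upto_zero N p : energy_upto N p (fun _ _ => 0) = 0.
Proof.
  unfold energy_upto. transitivity (0 * fsum N (fun _ => 0)); [|ring].
  rewrite <- fsum_scal_l. apply fsum_ext; intros.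
  transitivity (0 * fsum p (fun _ => 0)); [|ring].
  rewrite <- fsum_scal_l. apply fsum_ext; intros; ring.
Qed.

Lemma energy_upto_scal N p c x : energy_upto N p (fun t o => c * x t o) = c ^ 2 * energy_upto N p x.
Proof.
  unfold energy_upto. rewrite <- fsum_scal_l. apply fsum_ext; intros.
  rewrite <- fsum_scal_l. apply fsum_ext; intros; ring.
Qed.

Lemma dot_cauchy_schwarz N p x y :
  dot N p x y <= sqrt (energy_upto N p x) * sqrt (energy_upto N p y).
Proof.
  assert (Hroot : forall z, energy_upto N p z
                            = fsum N (fun t => sqrt (fsum p (fun o => z t o ^ 2)) ^ 2)).
  { intros z. apply fsum_ext; intros. rewrite pow2_sqrt; [reflexivity|apply energy_term_nonneg]. }
  rewrite !Hroot. eapply Rle_trans; [|apply fsum_cauchy_schwarz].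
  apply fsum_le; intros t _. apply fsum_cauchy_schwarz.
Qed.

Lemma energy_upto_add N p x y :
  sqrt (energy_upto N p (fun t o => x t o + y t o))
  <= sqrt (energy_upto N p x) + sqrt (energy_upto N p y).
Proof.
  assert (Hexp : energy_upto N p (fun t o => x t o + y t o)
                 = energy_upto N p x + 2 * dot N p x y + energy_upto N p y).
  { unfold energy_upto, dot. rewrite <- !fsum_scal_l, <- !fsum_add. apply fsum_ext; intros.
    rewrite <- !fsum_scal_l, <- !fsum_add. apply fsum_ext; intros; ring. }
  pose proof (dot_cauchy_schwarz N p x y).
  pose proof (sqrt_pos (energy_upto N p x)); pose proof (sqrt_pos (energy_upto N p y)).
  rewrite <- (sqrt_pow2 (sqrt (energy_upto N p x) + sqrt (energy_upto N p y))) by lra.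
  apply sqrt_le_1_alt. rewrite Hexp.
  replace ((sqrt (energy_upto N p x) + sqrt (energy_upto N p y)) ^ 2)
    with (sqrt (energy_upto N p x) ^ 2 + 2 * (sqrt (energy_upto N p x) * sqrt (energy_upto N p y))
          + sqrt (energy_upto N p y) ^ 2) by ring.
  rewrite !pow2_sqrt by apply energy_upto_nonneg. lra.
Qed.

Lemma energy_upto_fsum N p n (y : nat -> signal) :
  sqrt (energy_upto N p (fun t o => fsum n (fun j => y j t o)))
  <= fsum n (fun j => sqrt (energy_upto N p (y j))).
Proof.
  induction n as [|n IH]; simpl.
  - rewrite energy_upto_zero, sqrt_0. lra.
  - eapply Rle_trans; [apply (energy_upto_add N p (fun t o => fsum n (fun j => y j t o)) (y n))|].
    lra.
Qed.

Lemma energy_upto_le p x L N : energy p x L -> energy_upto N p x <= L.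
Proof. intros HL. apply infinite_sum_partial_le; [apply energy_term_nonneg|exact HL]. Qed.

Lemma energy_nonneg p x L : energy p x L -> 0 <= L.
Proof. intros HL. apply (energy_upto_le p x L 0 HL). Qed.

Lemma energy_of_bounded p x B :
  (forall N, energy_upto N p x <= B) -> exists L, energy p x L /\ L <= B.
Proof. apply infinite_sum_of_bounded. apply energy_term_nonneg. Qed.

Lemma energy_scal p c x L : energy p x L -> energy p (fun t o => c * x t o) (c ^ 2 * L).
Proof.
  intros HL. unfold energy.
  replace (fun t => fsum p (fun o => (c * x t o) ^ 2))
    with (fun t => c ^ 2 * fsum p (fun o => x t o ^ 2)).
  - apply infinite_sum_scal. exact HL.
  - apply functional_extensionality; intros t. rewrite <- fsum_scal_l. apply fsum_ext; intros; ring.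
Qed.

Lemma energy_add_exists p x y a b :
  energy p x a -> energy p y b -> exists c, energy p (fun t o => x t o + y t o) c.
Proof.
  intros Ha Hb.
  destruct (energy_of_bounded p (fun t o => x t o + y t o) ((sqrt a + sqrt b) ^ 2)) as [c [Hc _]].
  - intros N. apply sqrt_le_pow2; [apply energy_upto_nonneg|].
    eapply Rle_trans; [apply energy_upto_add|].
    apply Rplus_le_compat; apply sqrt_le_1_alt; eapply energy_upto_le; eassumption.
  - exists c; exact Hc.
Qed.

Lemma energy_parallelogram p x y a b c d :
  energy p x a -> energy p y b ->
  energy p (fun t o => x t o + y t o) c -> energy p (fun t o => x t o - y t o) d ->
  c + d = 2 * a + 2 * b.
Proof.
  intros Ha Hb Hc Hd.
  apply (uniqueness_sum (fun t => fsum p (fun o => (x t o + y t o) ^ 2)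
                                  + fsum p (fun o => (x t o - y t o) ^ 2))).
  - apply infinite_sum_plus; assumption.
  - replace (fun t => fsum p (fun o => (x t o + y t o) ^ 2) + fsum p (fun o => (x t o - y t o) ^ 2))
      with (fun t => 2 * fsum p (fun o => x t o ^ 2) + 2 * fsum p (fun o => y t o ^ 2)).
    + apply infinite_sum_plus; apply infinite_sum_scal; assumption.
    + apply functional_extensionality; intros t.
      rewrite <- !fsum_scal_l, <- !fsum_add. apply fsum_ext; intros; ring.
Qed.

Lemma energy_sign_choice p x y a b :
  energy p x a -> energy p y b ->
  exists s c, (s = 1 \/ s = -1) /\ energy p (fun t o => x t o + s * y t o) c /\ a + b <= c.
Proof.
  intros Ha Hb.
  assert (Hb' : energy p (fun t o => -1 * y t o) b).
  { replace b with ((-1) ^ 2 * b) by ring. apply energy_scal; exact Hb. }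
  destruct (energy_add_exists p x y a b Ha Hb) as [c1 Hc1].
  destruct (energy_add_exists p x _ a b Ha Hb') as [c2 Hc2].
  assert (Hpar : c1 + c2 = 2 * a + 2 * b).
  { apply (energy_parallelogram p x y); try assumption.
    replace (fun t o => x t o - y t o) with (fun t o => x t o + -1 * y t o); [exact Hc2|].
    signal_ext; ring. }
  destruct (Rle_or_lt (a + b) c1).
  - exists 1, c1. split; [left; reflexivity|split; [|assumption]].
    replace (fun t o => x t o + 1 * y t o) with (fun t o => x t o + y t o); [exact Hc1|].
    signal_ext; ring.
  - exists (-1), c2. split; [right; reflexivity|split; [exact Hc2|lra]].
Qed.

Lemma energy_signed_sum_ge p (v : nat -> signal) (E : nat -> R) n :
  (forall i, (i < n)%nat -> energy p (v i) (E i)) ->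
  exists (sg : nat -> R) (c : R), (forall i, sg i = 1 \/ sg i = -1) /\
    energy p (fun t o => fsum n (fun i => sg i * v i t o)) c /\ fsum n E <= c.
Proof.
  induction n as [|n IH]; intros HE.
  - destruct (energy_of_bounded p (fun _ _ => 0) 0) as [c [Hc _]].
    { intros N. rewrite energy_upto_zero. lra. }
    exists (fun _ => 1), c. split; [left; reflexivity|split; [exact Hc|]].
    exact (energy_nonneg p _ c Hc).
  - destruct IH as [sg [c [Hsg [Hc HcE]]]]; [intros; apply HE; lia|].
    destruct (energy_sign_choice p _ (v n) c (E n) Hc (HE n ltac:(lia)))
      as [s [c' [Hs [Hc' Hle]]]].
    exists (fun i => if (i =? n)%nat then s else sg i), c'.
    split; [intros i; destruct (i =? n)%nat; auto|split; [|simpl; lra]].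
    replace (fun t o => fsum (S n) (fun i => (if (i =? n)%nat then s else sg i) * v i t o))
      with (fun t o => fsum n (fun i => sg i * v i t o) + s * v n t o); [exact Hc'|].
    signal_ext. simpl. rewrite Nat.eqb_refl. f_equal.
    apply fsum_ext; intros i Hi. destruct (Nat.eqb_spec i n); [lia|reflexivity].
Qed.

(** * Responses of the system *)

Definition column (h : nat -> nat -> nat -> R) (j : nat) : signal := fun t o => h t o j.

Definition delay (ti : nat) (x : signal) : signal :=
  fun t o => if (ti <=? t)%nat then x (t - ti)%nat o else 0.

Definition channel_response (h : nat -> nat -> nat -> R) (j : nat) (d : signal) : signal :=
  fun t o => fsum (S t) (fun s => h (t - s)%nat o j * d s j).

Lemma sys_apply_channels m h d :
  sys_apply m h d = fun t o => fsum m (fun j => channel_response h j d t o).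
Proof. signal_ext. apply fsum_comm. Qed.

Lemma channel_response_impulse h j d a ti :
  (forall t, d t j = a * delta ti t) ->
  channel_response h j d = fun t o => a * delay ti (column h j) t o.
Proof.
  intros Hd. signal_ext. unfold channel_response, delay, column.
  rewrite (fsum_ext _ _ (fun s => (h (t - s)%nat o j * a) * delta ti s))
    by (intros; rewrite Hd; ring).
  rewrite fsum_delta. change (ti <? S t)%nat with (ti <=? t)%nat.
  destruct (ti <=? t)%nat; ring.
Qed.

Lemma delay_0 x : delay 0 x = x.
Proof. signal_ext. unfold delay. simpl. rewrite Nat.sub_0_r. reflexivity. Qed.

Lemma energy_upto_delay N p ti x : energy_upto N p (delay ti x) = energy_upto (N - ti) p x.
Proof.
  induction N as [|N IH]; [reflexivity|].
  change (energy_upto (S N) p (delay ti x))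
    with (energy_upto N p (delay ti x) + fsum p (fun o => delay ti x N o ^ 2)).
  rewrite IH. unfold delay. destruct (Nat.leb_spec ti N).
  - replace (S N - ti)%nat with (S (N - ti)) by lia. reflexivity.
  - replace (S N - ti)%nat with 0%nat by lia. replace (N - ti)%nat with 0%nat by lia.
    pose proof (energy_upto_zero 1 p) as H0. unfold energy_upto in *. simpl in *. lra.
Qed.

Lemma sys_apply_impulse0 m h a :
  sys_apply m h (fun t j => a j * delta 0 t) = fun t o => fsum m (fun j => a j * h t o j).
Proof.
  rewrite sys_apply_channels. signal_ext. apply fsum_ext; intros j _.
  rewrite (channel_response_impulse h j _ (a j) 0) by reflexivity.
  rewrite delay_0. reflexivity.
Qed.

Lemma sys_apply_impulse_input m h i : (i < m)%nat -> sys_apply m h (impulse_input i) = column h i.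
Proof.
  intros Hi.
  replace (impulse_input i) with (fun t j => delta i j * delta 0 t)
    by (signal_ext; unfold impulse_input, delta; ring).
  rewrite sys_apply_impulse0. signal_ext. unfold column.
  rewrite (fsum_ext _ _ (fun j => h t o j * delta i j)) by (intros; ring).
  rewrite fsum_delta. destruct (Nat.ltb_spec i m); [reflexivity|lia].
Qed.

Lemma abs_summable_sq_bounded f L :
  infinite_sum (fun t => Rabs (f t)) L -> forall N, fsum N (fun t => f t ^ 2) <= L ^ 2.
Proof.
  intros HL N.
  assert (Hpart : forall n, fsum n (fun t => Rabs (f t)) <= L)
    by (intros; apply infinite_sum_partial_le; [intros; apply Rabs_pos|exact HL]).
  assert (Hterm : forall t, Rabs (f t) <= L).
  { intros t. specialize (Hpart (S t)); simpl in Hpart.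
    assert (0 <= fsum t (fun t => Rabs (f t))) by (apply fsum_nonneg; intros; apply Rabs_pos).
    lra. }
  assert (HL0 : 0 <= L) by (eapply Rle_trans; [apply Rabs_pos|apply (Hterm 0%nat)]).
  apply Rle_trans with (L * fsum N (fun t => Rabs (f t))).
  - rewrite <- fsum_scal_l. apply fsum_le; intros t _.
    rewrite <- pow2_abs. simpl. rewrite Rmult_1_r.
    apply Rmult_le_compat_r; [apply Rabs_pos|apply Hterm].
  - replace (L ^ 2) with (L * L) by ring. apply Rmult_le_compat_l; [exact HL0|apply Hpart].
Qed.

Lemma column_energy_exists m p h j :
  stable m p h -> (j < m)%nat -> exists E, energy p (column h j) E.
Proof.
  intros Hstab Hj.
  destruct (fsum_bounded p (fun o N => fsum N (fun t => h t o j ^ 2))) as [B HB].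
  { intros o Ho. destruct (Hstab o j Ho Hj) as [L HL].
    exists (L ^ 2). apply abs_summable_sq_bounded; exact HL. }
  destruct (energy_of_bounded p (column h j) B) as [E [HE _]]; [|exists E; exact HE].
  intros N. unfold energy_upto, column. rewrite fsum_comm. apply HB.
Qed.

Lemma column_scale_inputs k h i : column (scale_inputs k h) i = fun t o => k i * column h i t o.
Proof. signal_ext. unfold column, scale_inputs. ring. Qed.

Lemma has_H2norm_of_column_energies m p h E :
  (forall i, (i < m)%nat -> energy p (column h i) (E i)) -> has_H2norm m p h (sqrt (fsum m E)).
Proof.
  intros HE. exists (fun i => sqrt (E i)). split.
  - intros i Hi. rewrite sys_apply_impulse_input by exact Hi.
    exists (E i). split; [apply HE; exact Hi|reflexivity].
  - f_equal. apply fsum_ext; intros i Hi.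
    rewrite pow2_sqrt; [reflexivity|exact (energy_nonneg _ _ _ (HE i Hi))].
Qed.

Lemma adjacent_response_energy m p h k E u u' :
  (forall j, (j < m)%nat -> energy p (column h j) (E j)) -> Adj m k u u' ->
  exists L, energy p (sys_apply m h (fun t j => u t j - u' t j)) L
            /\ sqrt L <= fsum m (fun j => k j * sqrt (E j)).
Proof.
  intros HE Hadj.
  set (y := sys_apply m h (fun t j => u t j - u' t j)).
  set (B := fsum m (fun j => k j * sqrt (E j))).
  assert (HB : forall N, sqrt (energy_upto N p y) <= B).
  { intros N. unfold y. rewrite sys_apply_channels.
    eapply Rle_trans; [apply (energy_upto_fsum N p m (fun j => channel_response h j _))|].
    apply fsum_le; intros j Hj. cbv beta.
    destruct (Hadj j Hj) as [ti [alpha [Halpha Hu]]].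
    rewrite (channel_response_impulse h j _ (- alpha) ti) by (intros t; specialize (Hu t); lra).
    rewrite energy_upto_scal, sqrt_mult_alt by apply pow2_ge_0.
    replace ((- alpha) ^ 2) with (Rsqr alpha) by (unfold Rsqr; ring). rewrite sqrt_Rsqr_abs.
    apply Rmult_le_compat; [apply Rabs_pos|apply sqrt_pos|exact Halpha|].
    apply sqrt_le_1_alt. rewrite energy_upto_delay. apply energy_upto_le, HE, Hj. }
  assert (HB0 : 0 <= B) by (eapply Rle_trans; [apply sqrt_pos|apply (HB 0%nat)]).
  destruct (energy_of_bounded p y (B ^ 2)) as [L [HL HLS]].
  { intros N. apply sqrt_le_pow2; [apply energy_upto_nonneg|apply HB]. }
  exists L. split; [exact HL|].
  rewrite <- (sqrt_pow2 B) by exact HB0. apply sqrt_le_1_alt. exact HLS.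
Qed.

Lemma sens_set_signed_impulse m p k h (sg : nat -> R) c :
  (forall i, (i < m)%nat -> 0 <= k i) -> (forall i, sg i = 1 \/ sg i = -1) ->
  energy p (fun t o => fsum m (fun i => sg i * column (scale_inputs k h) i t o)) c ->
  sens_set m p k h (sqrt c).
Proof.
  intros Hk Hsg Hc.
  exists (fun _ _ => 0), (fun t j => - (sg j * k j) * delta 0 t). split.
  - intros i Hi. exists 0%nat, (- (sg i * k i)). split; [|intros t; ring].
    specialize (Hk i Hi). apply Rabs_le. destruct (Hsg i) as [-> | ->]; lra.
  - exists c. split; [|reflexivity].
    change (energy p (sys_apply m h (fun t j => 0 - - (sg j * k j) * delta 0 t)) c).
    replace (fun t j => 0 - - (sg j * k j) * delta 0 t) with (fun t j => sg j * k j * delta 0 t)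
      by (signal_ext; ring).
    rewrite (sys_apply_impulse0 m h (fun j => sg j * k j)).
    replace (fun t o => fsum m (fun j => sg j * k j * h t o j))
      with (fun t o => fsum m (fun i => sg i * column (scale_inputs k h) i t o)); [exact Hc|].
    signal_ext. apply fsum_ext; intros. unfold column, scale_inputs. ring.
Qed.

Lemma fsum_weighted_sqrt_le m k E :
  (forall i, (i < m)%nat -> 0 <= E i) ->
  fsum m (fun j => k j * sqrt (E j)) <= vnorm2 m k * sqrt (fsum m E).
Proof.
  intros HE. unfold vnorm2.
  replace (fsum m E) with (fsum m (fun j => sqrt (E j) ^ 2))
    by (apply fsum_ext; intros; apply pow2_sqrt, HE; assumption).
  apply fsum_cauchy_schwarz.
Qed.

Theorem theorem4 (m p : nat) (h : nat -> nat -> nat -> R) (k : nat -> R)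
  (hk : forall i, (i < m)%nat -> 0 < k i)
  (hstab : stable m p h) :
  (forall u u', Adj m k u u' ->
     exists r, has_l2norm p (sys_apply m h (fun t j => u t j - u' t j)) r) /\
  exists Delta nG nGK : R,
    is_lub (sens_set m p k h) Delta /\
    has_H2norm m p h nG /\
    has_H2norm m p (scale_inputs k h) nGK /\
    nGK <= Delta <= vnorm2 m k * nG.
Proof.
  destruct (finite_choice 0 (fun j E => energy p (column h j) E) m
              (fun j Hj => column_energy_exists m p h j hstab Hj)) as [E HE].
  set (B := fsum m (fun j => k j * sqrt (E j))).
  assert (Hsens : forall r, sens_set m p k h r -> r <= B).
  { intros r [u [u' [Hadj [L [HL ->]]]]].
    destruct (adjacent_response_energy m p h k E u u' HE Hadj) as [L' [HL' HLS]].
    rewrite (uniqueness_sum _ _ _ HL HL'). exact HLS. }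
  assert (HEk : forall i, (i < m)%nat -> energy p (column (scale_inputs k h) i) (k i ^ 2 * E i))
    by (intros i Hi; rewrite column_scale_inputs; apply energy_scal, HE, Hi).
  destruct (energy_signed_sum_ge p _ _ m HEk) as [sg [c [Hsg [Hc HcE]]]].
  assert (Hwit : sens_set m p k h (sqrt c)).
  { apply (sens_set_signed_impulse m p k h sg c); auto. intros i Hi; apply Rlt_le, hk, Hi. }
  destruct (completeness (sens_set m p k h)) as [Delta HDelta];
    [exists B; exact Hsens|exists (sqrt c); exact Hwit|].
  split.
  - intros u u' Hadj.
    destruct (adjacent_response_energy m p h k E u u' HE Hadj) as [L [HL _]].
    exists (sqrt L), L. split; [exact HL|reflexivity].
  - exists Delta, (sqrt (fsum m E)), (sqrt (fsum m (fun i => k i ^ 2 * E i))).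
    split; [exact HDelta|].
    split; [apply has_H2norm_of_column_energies, HE|].
    split; [apply has_H2norm_of_column_energies, HEk|split].
    + apply Rle_trans with (sqrt c); [apply sqrt_le_1_alt, HcE|apply (proj1 HDelta), Hwit].
    + apply Rle_trans with B; [apply (proj2 HDelta); exact Hsens|].
      apply fsum_weighted_sqrt_le. intros i Hi. exact (energy_nonneg _ _ _ (HE i Hi)).
Qed.
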